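(* For any $q\in\mathbb{N}$, $s\in\mathbb{N}_0$ and $Y_s=\{y_i\}_{i=1}^s$ with $-1<y_s<\dots<y_1<1$, there exist a function $f\in\Delta^{(q)}(Y_s)$ and a set $A_p=\{\alpha_i\}_{i=1}^p$, $-1\le\alpha_p<\dots<\alpha_1\le1$, with $p\ge q+2$ and $A_p\cap Y_s=\emptyset$, such that for every $n\in\mathbb{N}_0$ there is no algebraic polynomial $P$ of degree $\le n$ with $P\in\Delta^{(q)}(Y_s)$ and $P(\alpha)=f(\alpha)$ for all $\alpha\in A_p$.
   Context: A function $g$ is $q$-monotone on an interval $J$, written $g\in\Delta^{(q)}(J)$, if all divided differences $[t_0,\dots,t_q;g]$ over $q+1$ distinct points of $J$ are nonnegative. With $y_0:=1$, $y_{s+1}:=-1$, $g\in\Delta^{(q)}(Y_s)$ iff $(-1)^ig\in\Delta^{(q)}([y_{i+1},y_i])$ for $0\le i\le s$; for $s=0$, $\Delta^{(q)}(Y_0)=\Delta^{(q)}([-1,1])$. *)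

From HB Require Import structures.
From mathcomp Require Import all_boot all_order all_algebra.
From mathcomp Require Import reals.
Set Implicit Arguments. Unset Strict Implicit. Unset Printing Implicit Defensive.
Import Order.TTheory GRing.Theory Num.Theory.
Local Open Scope ring_scope.

(* Divided difference [t_0,...,t_q; g] of g at the (distinct) points t_i,
   in the standard closed form  sum_i g(t_i) / prod_{j<>i} (t_i - t_j). *)
Definition divdiff (R : realType) (q : nat) (t : 'I_q.+1 -> R) (g : R -> R) : R :=
  \sum_(i < q.+1) g (t i) / \prod_(j < q.+1 | j != i) (t i - t j).

Definition qmonotone (R : realType) (q : nat) (g : R -> R) (a b : R) : Prop :=
  forall t : 'I_q.+1 -> R, injective t ->
    (forall i, a <= t i <= b) -> 0 <= divdiff t g.

Definition Yext (R : realType) (y : nat -> R) (s i : nat) : R :=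
  if i == 0%N then 1 else if i == s.+1 then -1 else y i.

Definition DeltaQ (R : realType) (q : nat) (y : nat -> R) (s : nat) (g : R -> R) : Prop :=
  forall i : nat, (i <= s)%N ->
    qmonotone q (fun x => (-1) ^+ i * g x) (Yext y s i.+1) (Yext y s i).

(* The data are f := the indicator of {1} and the nodes
   alpha_k := y_1 + (1 - y_1)/k, k = 1, ..., q + 2, so that alpha_1 = 1 and
   the other nodes lie in (y_1, 1).  The indicator is q-monotone on every
   [y_{i+1}, y_i], since only on [y_1, 1] can it be nonzero, and there its divided
   differences are 1 / prod_j (1 - t_j) >= 0.  An interpolating polynomial P that
   is q-monotone on [y_1, 1] vanishes at the q + 1 nodes alpha_2 > ... > alpha_(q+2).
   For x in (alpha_3, alpha_2), the divided difference of P over x and q of these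
   zeros reduces to P(x) / prod_j (x - z_j); omitting alpha_2 the product is
   positive and omitting alpha_3 it is negative, so P(x) = 0.  Hence P = 0,
   contradicting P(1) = f(1) = 1. *)
From HB Require Import structures.
From mathcomp Require Import all_boot all_order all_algebra.
From mathcomp Require Import reals.
Import Order.TTheory GRing.Theory Num.Theory.
Set Implicit Arguments. Unset Strict Implicit.
Local Open Scope ring_scope.

Lemma divdiff_single (R : realType) (q : nat) (t : 'I_q.+1 -> R) (g : R -> R) :
  (forall j : 'I_q, g (t (lift ord0 j)) = 0) ->
  divdiff t g = g (t ord0) / \prod_(j < q) (t ord0 - t (lift ord0 j)).
Proof.
move=> g_t0; rewrite /divdiff big_ord_recl [X in _ + X]big1 => [|j _]; last first.
  by rewrite g_t0 mul0r.
by rewrite addr0 big_mkcond big_ord_recl /= mul1r.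
Qed.

Lemma qmonotone_zeros_sign (R : realType) (q : nat) (g : R -> R) (a b x : R)
    (z : 'I_q -> R) :
  qmonotone q g a b -> injective z -> (forall j, a <= z j <= b) ->
  (forall j, g (z j) = 0) -> a <= x <= b -> (forall j, x != z j) ->
  0 <= g x / \prod_(j < q) (x - z j).
Proof.
move=> g_mono z_inj z_ab gz0 x_ab x_z.
pose t (i : 'I_q.+1) := if unlift ord0 i is Some j then z j else x.
have t0 : t ord0 = x by rewrite /t unlift_none.
have t_lift j : t (lift ord0 j) = z j by rewrite /t liftK.
have t_inj : injective t.
  move=> i1 i2; rewrite /t.
  case: unliftP => [j1 ->|->]; case: unliftP => [j2 ->|->] //.
  - by move/z_inj->.
  - by move/eqP; rewrite eq_sym (negbTE (x_z j1)).
  - by move/eqP; rewrite (negbTE (x_z j2)).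
have t_ab i : a <= t i <= b by rewrite /t; case: unlift.
have := g_mono t t_inj t_ab; rewrite divdiff_single => [|j]; last first.
  by rewrite t_lift gz0.
by rewrite t0; under eq_bigr do rewrite t_lift.
Qed.

Lemma qmonotone_vanish_between (R : realType) (q : nat) (g : R -> R) (a b : R)
    (z : nat -> R) :
  qmonotone q.+1 g a b ->
  (forall i j, (i < j <= q.+1)%N -> z j < z i) ->
  a <= z q.+1 -> z 0%N <= b ->
  (forall i, (i <= q.+1)%N -> g (z i) = 0) ->
  forall x, z 1%N < x < z 0%N -> g x = 0.
Proof.
move=> g_mono z_dec a_le b_ge gz0 x /andP[z1_x x_z0].
have z_le i j : (i <= j <= q.+1)%N -> z j <= z i.
  case/andP; rewrite leq_eqVlt => /predU1P[-> //|ij jq].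
  by apply/ltW/z_dec; rewrite ij.
have z_ab i : (i <= q.+1)%N -> a <= z i <= b.
  by move=> iq; rewrite (le_trans a_le) ?(le_trans _ b_ge) ?z_le ?iq ?leqnn.
have z_inj i j : (i <= q.+1)%N -> (j <= q.+1)%N -> z i = z j -> i = j.
  move=> iq jq zij; case: (ltngtP i j) => // [ij|ji].
    by have := z_dec i j; rewrite ij jq zij ltxx => /(_ isT).
  by have := z_dec j i; rewrite ji iq zij ltxx => /(_ isT).
have z_x i : (1 <= i <= q.+1)%N -> z i < x.
  by case/andP=> i1 iq; apply: le_lt_trans z1_x; rewrite z_le ?i1.
have x_ab : a <= x <= b.
  by rewrite (le_trans a_le (ltW (z_x q.+1 _))) ?(le_trans (ltW x_z0) b_ge) ?leqnn.
have x_z i : (i <= q.+1)%N -> x != z i.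
  case: i => [_|i iq]; first by rewrite lt_eqF.
  by rewrite gt_eqF ?z_x.
have sign (k : 'I_q.+1 -> nat) : injective k -> (forall j, k j <= q.+1)%N ->
    0 <= g x / \prod_(j < q.+1) (x - z (k j)).
  move=> k_inj k_le; apply: (qmonotone_zeros_sign g_mono) => // [j1 j2|j|j|j].
  - by move/z_inj => /(_ (k_le j1) (k_le j2))/k_inj.
  - exact: z_ab.
  - exact: gz0.
  - exact: x_z.
apply/eqP; rewrite eq_le; apply/andP; split.
- pose k (j : 'I_q.+1) := if val j == 0%N then 0%N else (val j).+1.
  have k_inj : injective k.
    move=> j1 j2; rewrite /k => e; apply: val_inj; move: e.
    by case: eqP => [->|_]; case: eqP => [->|_] // [].
  have k_le j : (k j <= q.+1)%N by rewrite /k; case: eqP => // _; exact: ltn_ord.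
  have := sign k k_inj k_le; rewrite big_ord_recl /= ler_ndivlMr ?mul0r //.
  rewrite pmulr_llt0; first by rewrite subr_lt0.
  by apply: prodr_gt0 => j _; rewrite subr_gt0 z_x // /k /= (ltn_ord (lift ord0 j)).
- have succ_inj : injective (fun j : 'I_q.+1 => (val j).+1) by move=> j1 j2 [] /val_inj.
  have := sign _ succ_inj (fun j => ltn_ord j).
  rewrite ler_pdivlMr ?mul0r //.
  by apply: prodr_gt0 => j _; rewrite subr_gt0 z_x ?ltn_ord.
Qed.

Lemma poly_eq0_on_itv (R : numFieldType) (P : {poly R}) (c d : R) :
  c < d -> (forall x, c < x < d -> P.[x] = 0) -> P = 0.
Proof.
move=> cd P0; apply/eqP/contraT => P_neq0.
pose pt (k : nat) := c + (d - c) / k.+2%:R.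
have pt_in k : c < pt k < d.
  rewrite ltrDl divr_gt0 ?subr_gt0 ?ltr0n //= -ltrBrDl ltr_pdivrMr ?ltr0n //.
  by rewrite ltr_pMr ?subr_gt0 // ltr1n.
have pt_inj : injective pt.
  move=> k1 k2 /addrI /mulfI; rewrite subr_eq0 gt_eqF // => /(_ isT) /invr_inj.
  by move/eqP; rewrite eqr_nat => /eqP [].
have := max_poly_roots P_neq0 (rs := mkseq pt (size P)).
rewrite size_mkseq ltnn mkseq_uniq //; apply => //.
by apply/allP => _ /mapP[k _ ->]; rewrite /root P0.
Qed.

Section Nodes.
Variables (R : realType) (a : R).
Hypothesis a_lt1 : a < 1.

Definition node (k : nat) : R := a + (1 - a) / k%:R.

Lemma node1 : node 1 = 1.
Proof. by rewrite /node invr1 mulr1 addrC subrK. Qed.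

Lemma node_lt (k l : nat) : (0 < k)%N -> (0 < l)%N -> (node k < node l) = (l < k)%N.
Proof.
move=> k_gt0 l_gt0; rewrite ltrD2l ltr_pM2l ?subr_gt0 //.
by rewrite ltf_pV2 ?posrE ?ltr0n // ltr_nat.
Qed.

Lemma node_gt (k : nat) : (0 < k)%N -> a < node k.
Proof. by move=> k_gt0; rewrite ltrDl divr_gt0 ?ltr0n // subr_gt0. Qed.

Lemma node_lt1 (k : nat) : (1 < k)%N -> node k < 1.
Proof. by move=> k_gt1; rewrite -[X in _ < X]node1 node_lt // ltnW. Qed.

Lemma qmonotone_node_zeros (q : nat) (P : {poly R}) :
  qmonotone q.+1 (fun x => P.[x]) a 1 ->
  (forall k, (2 <= k <= q.+3)%N -> P.[node k] = 0) -> P = 0.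
Proof.
move=> P_mono P_zero; apply: (@poly_eq0_on_itv _ _ (node 3) (node 2)).
  by rewrite node_lt.
move=> x; apply: (qmonotone_vanish_between (z := fun i => node i.+2) P_mono).
- by move=> i j /andP[ij _]; rewrite node_lt.
- by rewrite ltW ?node_gt.
- by rewrite ltW ?node_lt1.
- by move=> i iq; rewrite P_zero /=.
Qed.

End Nodes.

Section Knots.
Variables (R : realType) (y : nat -> R) (s : nat).
Hypothesis Yext_dec : forall i, (i <= s)%N -> Yext y s i.+1 < Yext y s i.

Lemma Yext_lt (i j : nat) : (i < j <= s.+1)%N -> Yext y s j < Yext y s i.
Proof.
case/andP=> ij js.
apply: (@Order.NatMonotonyTheory.nhomo_ltn_lt_in _ _ [pred k | (k <= s.+1)%N]) => //.
- by move=> m n; rewrite !inE => _ ns k /andP[_ /ltnW /leq_trans]; apply.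
- by move=> m; rewrite !inE => _ ms; apply: Yext_dec.
- by rewrite inE (leq_trans (ltnW ij)).
Qed.

Lemma Yext_le (i j : nat) : (i <= j <= s.+1)%N -> Yext y s j <= Yext y s i.
Proof.
by case/andP; rewrite leq_eqVlt => /predU1P[-> //|ij js]; rewrite ltW ?Yext_lt ?ij.
Qed.

Lemma Yext_inner (j : nat) : (1 <= j <= s)%N -> Yext y s j = y j.
Proof. by case/andP=> j1 js; rewrite /Yext gtn_eqF // ltn_eqF. Qed.

Lemma Yext1_ge : -1 <= Yext y s 1.
Proof.
have Yext_last : Yext y s s.+1 = -1 by rewrite /Yext eqxx.
by rewrite -Yext_last Yext_le ?leqnn.
Qed.

Lemma inner_le_Yext1 (j : nat) : (1 <= j <= s)%N -> y j <= Yext y s 1.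
Proof.
move=> j_in; rewrite -(Yext_inner j_in) Yext_le //.
by case/andP: j_in => -> /leqW.
Qed.

Lemma DeltaQ_qmonotone_top (q : nat) (g : R -> R) :
  DeltaQ q y s g -> qmonotone q g (Yext y s 1) 1.
Proof.
move=> /(_ 0%N (leq0n s)) g_mono t t_inj t_in.
suff -> : divdiff t g = divdiff t (fun x => (-1) ^+ 0 * g x) by exact: g_mono.
by apply: eq_bigr => i _; rewrite expr0 mul1r.
Qed.

Lemma DeltaQ_indicator1 (q : nat) :
  DeltaQ q y s (fun x : R => if x == 1 then 1 else 0).
Proof.
move=> i i_le t _ t_in; apply: sumr_ge0 => m _.
case: eqP => [tm1|_]; last by rewrite mulr0 mul0r.
have i0 : i = 0%N.
  case: i i_le t_in => // i i_le /(_ m); rewrite tm1 => /andP[_].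
  by rewrite leNgt (Yext_lt (i := 0)) //= leqW.
rewrite i0 expr0 !mul1r invr_ge0; apply: prodr_ge0 => j _.
by rewrite tm1 subr_ge0; have /andP[_] := t_in j; rewrite i0.
Qed.

End Knots.

Theorem lemma1p1 (R : realType) (q s : nat) (y : nat -> R) :
  (1 <= q)%N ->
  (forall i : nat, (i <= s)%N -> Yext y s i.+1 < Yext y s i) ->
  exists (f : R -> R) (p : nat) (alpha : nat -> R),
    DeltaQ q y s f /\
    (q + 2 <= p)%N /\
    (-1 <= alpha p /\ alpha 1%N <= 1) /\
    (forall i : nat, (1 <= i < p)%N -> alpha i.+1 < alpha i) /\
    (forall i j : nat, (1 <= i <= p)%N -> (1 <= j <= s)%N -> alpha i <> y j) /\
    forall n : nat, ~ exists P : {poly R},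
          (size P <= n.+1)%N /\
          DeltaQ q y s (fun x => P.[x]) /\
          forall i : nat, (1 <= i <= p)%N -> P.[alpha i] = f (alpha i).
Proof.
case: q => [//|q] _ Y_dec; have a_lt1 : Yext y s 1 < 1 := Y_dec 0%N (leq0n s).
exists (fun x => if x == 1 then 1 else 0), q.+3, (node (Yext y s 1)).
split; first exact: DeltaQ_indicator1.
split; first by rewrite addn2.
split.
  by split; [apply: le_trans (Yext1_ge Y_dec) (ltW (node_gt _ _)) | rewrite node1].
split; first by move=> i /andP[i1 _]; rewrite node_lt ?(leq_trans i1).
split.
  move=> i j /andP[i1 _] /(inner_le_Yext1 Y_dec) y_le; apply/eqP.
  by rewrite gt_eqF // (le_lt_trans y_le) ?node_gt.
move=> n [P [_ [P_mono P_node]]].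
have P1 : P.[1] = 1 by rewrite -(node1 (Yext y s 1)) P_node //= node1 eqxx.
suff P0 : P = 0 by move: P1; rewrite P0 horner0 => /eqP; rewrite eq_sym oner_eq0.
apply: (qmonotone_node_zeros a_lt1 (DeltaQ_qmonotone_top P_mono)) => k /andP[k2 kq].
by rewrite P_node ?(ltnW k2) // lt_eqF // node_lt1.
Qed.
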